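(* Fix $\alpha\in(0,1)$ and $L\in\mathbb{N}$. Every $f\in\mathcal{N}_1(L)$ is an $\alpha$-power piecewise linear function with at most $L+1$ linear pieces.
   Context: Leaky-ReLU: $\sigma_\alpha(x)=\max(\alpha x,x)$. $\mathcal{N}_1(L)$ is the set of functions $f_L:\mathbb{R}\to\mathbb{R}$ with $f_0(x)=w_0x+b_0$, $f_k(x)=w_k\sigma_\alpha(f_{k-1}(x))+b_k$ ($k=1,\dots,L$), $w_k,b_k\in\mathbb{R}$. A piecewise linear (PL) function is a continuous function $g:\mathbb{R}\to\mathbb{R}$ which is affine on each of finitely many intervals partitioning $\mathbb{R}$ (separated by finitely many breakpoints). A PL function $g$ is called $\alpha$-power PL if there is a constant $c\in\mathbb{R}$ such that the slope of every linear piece of $g$ lies in $\{c\alpha^k: k\in\mathbb{Z}\}$. *)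

From Stdlib Require Import Reals Lra Lia List.
Open Scope R_scope.

Definition leaky (alpha x : R) : R := Rmax (alpha * x) x.

Fixpoint net (alpha : R) (w b : nat -> R) (k : nat) (x : R) : R :=
  match k with
  | O => w O * x + b O
  | S k' => w (S k') * leaky alpha (net alpha w b k' x) + b (S k')
  end.

Definition N1 (alpha : R) (L : nat) (f : R -> R) : Prop :=
  exists w b : nat -> R, forall x, f x = net alpha w b L x.

(* Breakpoints bs = [t_0 < ... < t_(n-1)] cut R into n+1 pieces:
   piece 0 = (-oo, t_0], piece i = [t_(i-1), t_i], piece n = [t_(n-1), +oo). *)
Definition strictly_increasing (bs : list R) : Prop :=
  forall i, (S i < length bs)%nat -> nth i bs 0 < nth (S i) bs 0.

Definition in_piece (bs : list R) (i : nat) (x : R) : Prop :=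
  (i = O \/ nth (i - 1) bs 0 <= x) /\ (i = length bs \/ x <= nth i bs 0).

Definition PL_repr (g : R -> R) (bs : list R) (s c : nat -> R) : Prop :=
  continuity g /\ strictly_increasing bs /\
  forall i x, (i <= length bs)%nat -> in_piece bs i x -> g x = s i * x + c i.

Definition alpha_power_PL_at_most (alpha : R) (m : nat) (g : R -> R) : Prop :=
  exists (bs : list R) (s c : nat -> R),
    PL_repr g bs s c /\ (length bs + 1 <= m)%nat /\
    exists c0 : R, forall i, (i <= length bs)%nat ->
      exists k : Z, s i = c0 * powerRZ alpha k.

From Stdlib Require Import Reals Lra Lia List Permutation Sorted Orders Mergesort.
From Stdlib Require Import Classical IndefiniteDescription FunctionalExtensionality.
Open Scope R_scope.

(* By induction on the depth, f_k is affine with slopes in c0 * alpha^Z on the intervals cut out by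
   at most k points.  Either c0 = 0 and f_k is locally constant, or f_k is strictly monotone and hence
   has at most one zero; the next Leaky-ReLU is the identity where f_k >= 0 and multiplication by
   alpha where f_k <= 0, so it adds at most that zero as a new breakpoint. *)

Lemma leaky_nonneg alpha u : alpha <= 1 -> 0 <= u -> leaky alpha u = u.
Proof. intros; unfold leaky, Rmax; destruct Rle_dec; nra. Qed.

Lemma leaky_nonpos alpha u : alpha <= 1 -> u <= 0 -> leaky alpha u = alpha * u.
Proof. intros; unfold leaky, Rmax; destruct Rle_dec; nra. Qed.

Lemma leaky_abs alpha : leaky alpha = fun u => (alpha * u + u + Rabs (alpha * u - u)) / 2.
Proof.
  apply functional_extensionality; intro u; unfold leaky, Rmax, Rabs.
  destruct Rle_dec, Rcase_abs; lra.
Qed.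

Lemma continuity_leaky alpha : continuity (leaky alpha).
Proof. rewrite leaky_abs; reg. Qed.

Lemma continuity_leaky_layer alpha w b g : continuity g ->
  continuity (fun x => w * leaky alpha (g x) + b).
Proof.
  intros Hg; apply (continuity_plus (fun x => w * leaky alpha (g x)) (fun _ => b)).
  - apply (continuity_scal (fun x => leaky alpha (g x))).
    apply (continuity_comp g (leaky alpha)); [exact Hg | apply continuity_leaky].
  - apply continuity_const; intros ? ?; reflexivity.
Qed.

Lemma continuity_net alpha w b L : continuity (net alpha w b L).
Proof.
  induction L as [|L IH]; simpl.
  - reg.
  - exact (continuity_leaky_layer alpha (w (S L)) (b (S L)) _ IH).
Qed.

Definition cut_free (T : list R) (x y : R) : Prop := forall t, In t T -> ~ (x < t < y).

Definition alpha_power (alpha c0 s : R) : Prop := exists k : Z, s = c0 * powerRZ alpha k.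

(* [T] is an unsorted list of cut points, possibly with repetitions. *)
Definition power_affine_off (alpha c0 : R) (T : list R) (g : R -> R) : Prop :=
  forall x y, x < y -> cut_free T x y ->
    exists s c, alpha_power alpha c0 s /\ forall z, x <= z <= y -> g z = s * z + c.

Lemma cut_free_incl T T' x y : incl T T' -> cut_free T' x y -> cut_free T x y.
Proof. intros Hincl Hfree t Ht; exact (Hfree t (Hincl t Ht)). Qed.

Lemma cut_free_glue (P : R -> R -> Prop) (T : list R) :
  (forall x t y, x < t < y -> P x t -> P t y -> P x y) ->
  (forall x y, x < y -> cut_free T x y -> P x y) ->
  forall x y, x < y -> P x y.
Proof.
  intros Hglue; induction T as [|t T IH]; intros HT.
  - intros x y Hxy; apply HT; [exact Hxy | intros t []].
  - apply IH; intros x y Hxy Hfree.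
    destruct (Rlt_dec x t) as [Hxt|Hxt]; [destruct (Rlt_dec t y) as [Hty|Hty]|].
    + apply (Hglue x t y); [lra | apply HT | apply HT]; try lra;
        intros u [<-|Hu] Hu'; try lra; apply (Hfree u Hu); lra.
    + apply HT; [exact Hxy|]; intros u [<-|Hu]; [lra | exact (Hfree u Hu)].
    + apply HT; [exact Hxy|]; intros u [<-|Hu]; [lra | exact (Hfree u Hu)].
Qed.

Lemma power_affine_off_strict_mono alpha c0 T g : 0 < alpha -> c0 <> 0 ->
  power_affine_off alpha c0 T g -> forall x y, x < y -> 0 < c0 * (g y - g x).
Proof.
  intros Ha Hc0 Hg; apply (cut_free_glue (fun x y => 0 < c0 * (g y - g x)) T); [intros; lra|].
  intros x y Hxy Hfree.
  destruct (Hg x y Hxy Hfree) as [s [c [[k ->] Hk]]].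
  rewrite (Hk x), (Hk y) by lra.
  pose proof (powerRZ_lt alpha k Ha); pose proof (Rsqr_pos_lt c0 Hc0); unfold Rsqr in *.
  replace (c0 * (c0 * powerRZ alpha k * y + c - (c0 * powerRZ alpha k * x + c)))
    with (c0 * c0 * powerRZ alpha k * (y - x)) by ring.
  apply Rmult_lt_0_compat; [apply Rmult_lt_0_compat|]; lra.
Qed.

Lemma strict_mono_zeros c0 (g : R -> R) : (forall x y, x < y -> 0 < c0 * (g y - g x)) ->
  exists Z, (length Z <= 1)%nat /\ forall t, g t = 0 -> In t Z.
Proof.
  intros Hmono; destruct (classic (exists t, g t = 0)) as [[t Ht]|Hnone].
  - exists (t :: nil); split; [simpl; lia|]; intros u Hu; left.
    destruct (Rtotal_order t u) as [Htu|[Htu|Htu]]; [|exact Htu|];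
      [pose proof (Hmono t u Htu) | pose proof (Hmono u t Htu)]; rewrite Ht, Hu in *; lra.
  - exists nil; split; [simpl; lia|]; intros t Ht; exfalso; eauto.
Qed.

Lemma affine_constant_sign (g : R -> R) s c x y :
  (forall z, x <= z <= y -> g z = s * z + c) -> (forall z, x < z < y -> g z <> 0) ->
  (forall z, x <= z <= y -> 0 <= g z) \/ (forall z, x <= z <= y -> g z <= 0).
Proof.
  intros Hg Hzero.
  destruct (Req_dec s 0) as [->|Hs].
  - destruct (Rle_dec 0 c); [left|right]; intros z Hz; rewrite Hg by exact Hz; lra.
  - set (z0 := - c / s).
    assert (Hroot : forall z, s * z + c = s * (z - z0)) by (intro; unfold z0; field; exact Hs).
    assert (Hout : z0 <= x \/ y <= z0).
    { destruct (Rle_dec z0 x); [now left|]; destruct (Rle_dec y z0); [now right|].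
      exfalso; apply (Hzero z0); [lra|].
      rewrite Hg, Hroot by lra; ring. }
    destruct (Rlt_dec 0 s), Hout; [left|right|right|left];
      intros z Hz; rewrite Hg, Hroot by exact Hz; nra.
Qed.

(* On a piece where [g] keeps a sign the layer is affine, with slope multiplied by [w] or [w alpha]. *)
Lemma power_affine_off_leaky alpha c0 T T' g w b : 0 < alpha <= 1 -> incl T T' ->
  power_affine_off alpha c0 T g ->
  (forall x y, x < y -> cut_free T' x y ->
     (forall z, x <= z <= y -> 0 <= g z) \/ (forall z, x <= z <= y -> g z <= 0)) ->
  power_affine_off alpha (w * c0) T' (fun x => w * leaky alpha (g x) + b).
Proof.
  intros Ha Hincl Hg Hsign x y Hxy Hfree.
  destruct (Hg x y Hxy (cut_free_incl _ _ _ _ Hincl Hfree)) as [s [c [[k ->] Hk]]].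
  destruct (Hsign x y Hxy Hfree) as [Hpos|Hneg].
  - exists (w * c0 * powerRZ alpha k), (w * c + b); split; [exists k; ring|].
    intros z Hz; rewrite leaky_nonneg, Hk by (lra || auto); ring.
  - exists (w * c0 * powerRZ alpha (k + 1)), (w * alpha * c + b); split; [exists (k + 1)%Z; ring|].
    intros z Hz; rewrite leaky_nonpos, Hk by (lra || auto).
    rewrite powerRZ_add by lra; simpl; ring.
Qed.

Lemma power_affine_off_leaky_layer alpha c0 T g w b : 0 < alpha <= 1 ->
  power_affine_off alpha c0 T g ->
  exists T', (length T' <= S (length T))%nat /\
    power_affine_off alpha (w * c0) T' (fun x => w * leaky alpha (g x) + b).
Proof.
  intros Ha Hg; destruct (Req_dec c0 0) as [->|Hc0].
  - exists T; split; [lia|]; apply power_affine_off_leaky with T; [exact Ha | apply incl_refl | exact Hg|].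
    intros x y Hxy Hfree; destruct (Hg x y Hxy Hfree) as [s [c [[k ->] Hk]]].
    destruct (Rle_dec 0 c); [left|right]; intros z Hz; rewrite Hk by exact Hz; lra.
  - destruct (strict_mono_zeros c0 g) as [Z [HZ Hzeros]].
    { exact (power_affine_off_strict_mono alpha c0 T g ltac:(lra) Hc0 Hg). }
    exists (Z ++ T); split; [rewrite length_app; lia|].
    apply power_affine_off_leaky with T; [exact Ha | apply incl_appr, incl_refl | exact Hg|].
    intros x y Hxy Hfree.
    destruct (Hg x y Hxy (cut_free_incl T _ _ _ (incl_appr Z (incl_refl T)) Hfree))
      as [s [c [_ Hk]]].
    apply (affine_constant_sign g s c x y Hk); intros z Hz Hgz.
    exact (Hfree z (in_or_app _ _ _ (or_introl (Hzeros z Hgz))) Hz).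
Qed.

Lemma net_power_affine_off alpha w b L : 0 < alpha <= 1 ->
  exists T c0, (length T <= L)%nat /\ power_affine_off alpha c0 T (net alpha w b L).
Proof.
  intros Ha; induction L as [|L [T [c0 [HT Hnet]]]].
  - exists nil, (w O); split; [simpl; lia|].
    intros x y _ _; exists (w O), (b O); split; [exists 0%Z; simpl; ring | reflexivity].
  - destruct (power_affine_off_leaky_layer alpha c0 T _ (w (S L)) (b (S L)) Ha Hnet)
      as [T' [HT' Hlayer]].
    exists T', (w (S L) * c0); split; [lia | exact Hlayer].
Qed.

Module RleBool <: TotalLeBool.
  Definition t := R.
  Definition leb (x y : R) : bool := if Rle_dec x y then true else false.
  Lemma leb_total x y : leb x y = true \/ leb y x = true.
  Proof. unfold leb; destruct (Rle_dec x y), (Rle_dec y x); auto; lra. Qed.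
End RleBool.

Module RSort := Sort RleBool.

Definition breakpoints (T : list R) : list R := RSort.sort (nodup Req_EM_T T).

Lemma In_breakpoints T t : In t (breakpoints T) <-> In t T.
Proof.
  unfold breakpoints; rewrite <- (nodup_In Req_EM_T T t).
  split; apply Permutation_in; [symmetry|]; apply RSort.Permuted_sort.
Qed.

Lemma length_breakpoints T : (length (breakpoints T) <= length T)%nat.
Proof.
  unfold breakpoints; rewrite <- (Permutation_length (RSort.Permuted_sort _)).
  apply NoDup_incl_length; [apply NoDup_nodup | intros t; apply nodup_In].
Qed.

Lemma StronglySorted_nth {A} (Rel : A -> A -> Prop) (l : list A) d : StronglySorted Rel l ->
  forall i j, (i < j < length l)%nat -> Rel (nth i l d) (nth j l d).
Proof.
  induction l as [|a l IH]; simpl; intros Hl i j Hij; [lia|].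
  apply StronglySorted_inv in Hl as [Hl Ha].
  destruct i, j; try lia.
  - rewrite Forall_forall in Ha; apply Ha, nth_In; lia.
  - apply IH; [exact Hl | lia].
Qed.

Lemma breakpoints_increasing T i j : (i < j < length (breakpoints T))%nat ->
  nth i (breakpoints T) 0 < nth j (breakpoints T) 0.
Proof.
  intros Hij.
  assert (Hle : nth i (breakpoints T) 0 <= nth j (breakpoints T) 0).
  { assert (Hsorted : StronglySorted (fun x y => RleBool.leb x y = true) (breakpoints T)).
    { apply Sorted_StronglySorted; [|apply RSort.Sorted_sort].
      intros x y z; unfold RleBool.leb; destruct Rle_dec, Rle_dec, Rle_dec; auto; lra. }
    pose proof (StronglySorted_nth _ _ 0 Hsorted i j Hij) as Hnth.
    unfold RleBool.leb in Hnth; destruct Rle_dec; [assumption | discriminate]. }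
  assert (Hneq : nth i (breakpoints T) 0 <> nth j (breakpoints T) 0).
  { intros E; apply (NoDup_nth (breakpoints T) 0) in E; [lia | | lia | lia].
    apply (Permutation_NoDup (RSort.Permuted_sort _)), NoDup_nodup. }
  lra.
Qed.

Section Pieces.

Variable bs : list R.
Hypothesis bs_increasing : forall i j, (i < j < length bs)%nat -> nth i bs 0 < nth j bs 0.

Lemma in_piece_convex i x y z :
  in_piece bs i x -> in_piece bs i y -> x <= z <= y -> in_piece bs i z.
Proof.
  unfold in_piece; intros [[?|?] [?|?]] [[?|?] [?|?]] ?;
    split; solve [left; assumption | right; lra].
Qed.

Lemma in_piece_cut_free i x y : (i <= length bs)%nat ->
  in_piece bs i x -> in_piece bs i y -> cut_free bs x y.
Proof.
  intros Hi [Hx _] [_ Hy] t Ht Hin.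
  apply In_nth with (d := 0) in Ht as [j [Hj <-]].
  destruct (Nat.lt_ge_cases j i).
  - destruct Hx as [Hx|Hx]; [lia|].
    destruct (Nat.eq_dec j (i - 1)) as [->|];
      [|pose proof (bs_increasing j (i - 1) ltac:(lia))]; lra.
  - destruct Hy as [Hy|Hy]; [lia|].
    destruct (Nat.eq_dec i j) as [->|];
      [|pose proof (bs_increasing i j ltac:(lia))]; lra.
Qed.

Lemma in_piece_two_points i : (i <= length bs)%nat ->
  exists a0 a1, a0 < a1 /\ in_piece bs i a0 /\ in_piece bs i a1.
Proof.
  unfold in_piece; intros Hi.
  destruct (length bs) as [|n] eqn:Elen.
  - exists 0, 1; split; [lra|]; split; split; left; lia.
  - destruct i as [|i].
    + exists (nth 0 bs 0 - 1), (nth 0 bs 0); split; [lra|]; split; split; solve [left; lia | right; lra].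
    + replace (S i - 1)%nat with i by lia.
      destruct (Nat.eq_dec i n) as [->|].
      * exists (nth n bs 0), (nth n bs 0 + 1); split; [lra|]; split; split; solve [left; lia | right; lra].
      * pose proof (bs_increasing i (S i) ltac:(lia)).
        exists (nth i bs 0), (nth (S i) bs 0); split; [lra|]; split; split; right; lra.
Qed.

End Pieces.

(* Two points of a convex set [P] fix the affine function on every interval of [P] containing them,
   hence on all of [P]. *)
Lemma affine_on_convex (P : R -> Prop) (S : R -> Prop) (g : R -> R) a0 a1 :
  (forall x y z, P x -> P y -> x <= z <= y -> P z) -> a0 < a1 -> P a0 -> P a1 ->
  (forall x y, P x -> P y -> x < y ->
     exists s c, S s /\ forall z, x <= z <= y -> g z = s * z + c) ->
  exists s c, S s /\ forall z, P z -> g z = s * z + c.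
Proof.
  intros Hconv Ha P0 P1 Haff.
  destruct (Haff a0 a1 P0 P1 Ha) as [s [c [Hs Hg]]].
  exists s, c; split; [exact Hs|]; intros z Hz.
  assert (Plo : P (Rmin z a0)) by (unfold Rmin; destruct Rle_dec; assumption).
  assert (Phi : P (Rmax z a1)) by (unfold Rmax; destruct Rle_dec; assumption).
  pose proof (Rmin_l z a0); pose proof (Rmin_r z a0); pose proof (Rmax_l z a1); pose proof (Rmax_r z a1).
  destruct (Haff _ _ Plo Phi ltac:(lra)) as [s' [c' [_ Hg']]].
  pose proof (Hg a0 ltac:(lra)); pose proof (Hg a1 ltac:(lra)).
  pose proof (Hg' a0 ltac:(lra)); pose proof (Hg' a1 ltac:(lra)).
  assert (Hslope : s' = s).
  { apply Rmult_eq_reg_r with (a1 - a0); lra. }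
  subst s'; assert (c' = c) by lra; subst c'.
  apply Hg'; lra.
Qed.

Lemma power_affine_off_PL alpha c0 m T g : continuity g -> (length T <= m)%nat ->
  power_affine_off alpha c0 T g -> alpha_power_PL_at_most alpha (m + 1) g.
Proof.
  intros Hcont HT Hg.
  pose proof (breakpoints_increasing T) as Hinc.
  pose proof (length_breakpoints T) as Hlen.
  set (bs := breakpoints T) in *.
  (* The guard [i <= length bs] makes the relation total, so that choice applies. *)
  assert (Hpieces : forall i, exists p : R * R, (i <= length bs)%nat ->
    alpha_power alpha c0 (fst p) /\ forall x, in_piece bs i x -> g x = fst p * x + snd p).
  { intros i; destruct (Compare_dec.le_lt_dec i (length bs)) as [Hi|Hi];
      [|exists (0, 0); intros; lia].
    destruct (in_piece_two_points bs Hinc i Hi) as [a0 [a1 [Ha [P0 P1]]]].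
    destruct (affine_on_convex (in_piece bs i) (alpha_power alpha c0) g a0 a1
                (in_piece_convex bs i) Ha P0 P1) as [s [c Hsc]].
    { intros x y Hx Hy Hxy; apply Hg; [exact Hxy|].
      intros t Ht; apply (in_piece_cut_free bs Hinc i x y Hi Hx Hy), In_breakpoints, Ht. }
    exists (s, c); intros _; exact Hsc. }
  destruct (functional_choice _ Hpieces) as [p Hp].
  exists bs, (fun i => fst (p i)), (fun i => snd (p i)); split; [|split].
  - split; [exact Hcont | split].
    + intros i Hi; apply Hinc; lia.
    + intros i x Hi; apply (Hp i Hi).
  - lia.
  - exists c0; intros i Hi; apply (Hp i Hi).
Qed.

Theorem mainTheorem3 (alpha : R) (L : nat) (f : R -> R) :
  0 < alpha < 1 -> N1 alpha L f -> alpha_power_PL_at_most alpha (L + 1) f.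
Proof.
  intros Ha [w [b Hf]].
  replace f with (net alpha w b L) by (symmetry; apply functional_extensionality, Hf).
  destruct (net_power_affine_off alpha w b L ltac:(lra)) as [T [c0 [HT Hnet]]].
  exact (power_affine_off_PL alpha c0 L T _ (continuity_net alpha w b L) HT Hnet).
Qed.
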